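(* Fix integers $a,b\ge 2$ and $\varepsilon>0$. Let $n\to\infty$ and let $m=m(n)$ satisfy $m/n\to\infty$. Then all hypergraphs $H\in\mathcal{H}(a,n,m)$, except for $o\!\left(\binom{\binom{n}{a}}{m}\right)$ of them, have the following property: for every coloring $C:[n]\to[b]$ and every $a$-element multiset $T$ of colors from $[b]$, the number of hyperedges of $H$ whose color multiset with respect to $C$ is $T$ lies in the interval $\left[(p^C(T)-\varepsilon)m,\ (p^C(T)+\varepsilon)m\right]$.
   Context: $\mathcal{H}(a,n,m)$ is the family of all $a$-uniform hypergraphs on vertex set $[n]$ with exactly $m$ hyperedges (each hyperedge an $a$-element subset of $[n]$); so $|\mathcal{H}(a,n,m)|=\binom{\binom{n}{a}}{m}$. A coloring $C:[n]\to[b]$ is an arbitrary map (not necessarily proper). For a coloring $C$, $n_j^C$ is the number of vertices of color $j$. The color multiset of a hyperedge $e$ with respect to $C$ is the multiset of colors $C(v)$, $v\in e$, counted with multiplicity. For an $a$-element multiset $T$ of colors, $I_T(j)$ is the multiplicity of $j$ in $T$, and $p^C(T)=\prod_{j=1}^b\binom{n_j^C}{I_T(j)}\big/\binom{n}{a}$, i.e. the probability that a uniformly random $a$-subset of $[n]$ has color multiset $T$. *)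

From mathcomp Require Import all_boot all_order all_algebra.
From mathcomp Require Import reals.
Set Implicit Arguments. Unset Strict Implicit. Unset Printing Implicit Defensive.
Import Order.TTheory GRing.Theory Num.Theory.
Local Open Scope ring_scope.

(* Vertex set [n] is 'I_n, color set [b] is 'I_b.
   A hyperedge is a {set 'I_n}; a hypergraph is a {set {set 'I_n}}. *)

Definition hyp_family (a n m : nat) : {set {set {set 'I_n}}} :=
  [set H : {set {set 'I_n}} | (H \subset [set e : {set 'I_n} | #|e| == a])
                              && (#|H| == m)%N].

Definition coloring (n b : nat) := {ffun 'I_n -> 'I_b}.

(* An a-element multiset T of colors from [b], given by its multiplicity
   function I_T : [b] -> nat (values bounded by a), with total size a. *)
Definition cmset (a b : nat) := {ffun 'I_b -> 'I_a.+1}.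
Definition is_amset (a b : nat) (T : cmset a b) : bool :=
  (\sum_(j < b) (T j : nat) == a)%N.

Definition ncol (n b : nat) (C : coloring n b) (j : 'I_b) : nat :=
  #|[set v : 'I_n | C v == j]|.

Definition has_type (a n b : nat) (C : coloring n b) (e : {set 'I_n})
  (T : cmset a b) : bool :=
  [forall j : 'I_b, #|[set v in e | C v == j]| == (T j : nat)].

Definition count_type (a n b : nat) (H : {set {set 'I_n}}) (C : coloring n b)
  (T : cmset a b) : nat :=
  #|[set e in H | has_type C e T]|.

Definition pC (R : realType) (a n b : nat) (C : coloring n b) (T : cmset a b) : R :=
  (\prod_(j < b) 'C(ncol C j, T j))%:R / 'C(n, a)%:R.

Definition good (R : realType) (a b n m : nat) (eps : R) (H : {set {set 'I_n}}) : bool :=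
  [forall C : coloring n b, forall T : cmset a b, is_amset T ==>
     (((@pC R a n b C T - eps) * m%:R <= (count_type H C T)%:R) &&
      ((count_type H C T)%:R <= (@pC R a n b C T + eps) * m%:R))].

Definition bad_family (R : realType) (a b n m : nat) (eps : R) : {set {set {set 'I_n}}} :=
  [set H in hyp_family a n m | ~~ @good R a b n m eps H].

(* Fix a colouring [C] and a type [T] and let [S] be the set of [a]-sets of type
   [T], so that [p^C(T) = |S| / 'C(n, a)].  For a uniformly random [m]-subset [H]
   of the [a]-sets, [|H :&: S|] is hypergeometric with mean [p m]; its factorial
   moments are at most those of the binomial [Bin(m, p)], whence
   [E (1 + mu) ^ |H :&: S| <= (1 + p mu) ^ m], and the exponential Markov inequality
   with [mu = eps / 2] bounds the probability of an [eps m]-deviation by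
   [2 exp (- c(eps) m)].  A union bound over the at most [b ^ n (a + 1) ^ b] pairs
   [(C, T)] only costs a factor exponential in [n], which [exp (- c m)] beats as soon
   as [m / n -> oo]. *)

From mathcomp Require Import all_boot all_order all_algebra.
From mathcomp Require Import reals sequences exp zify.
From mathcomp.algebra_tactics Require Import ring lra.
Set Implicit Arguments. Unset Strict Implicit. Unset Printing Implicit Defensive.

Lemma mul_bin_subset N m j : j <= m ->
  'C(N, j) * 'C(N - j, m - j) = 'C(m, j) * 'C(N, m).
Proof.
move=> jm; have [mN | Nm] := leqP m N; last first.
  rewrite (bin_small Nm) muln0; have [jN | Nj] := leqP j N; last by rewrite bin_small.
  by rewrite (@bin_small (N - j)) ?muln0 // ltn_sub2rE.
have jN := leq_trans jm mN.
have Nmj : N - j - (m - j) = N - m by rewrite subnBA // subnK.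
apply/eqP; rewrite -(eqn_pmul2r (fact_gt0 j)) -(eqn_pmul2r (fact_gt0 (m - j))).
rewrite -(eqn_pmul2r (fact_gt0 (N - m))) -!mulnA.
have -> : 'C(N, j) * ('C(N - j, m - j) * (j`! * ((m - j)`! * (N - m)`!)))
    = 'C(N, j) * (j`! * ('C(N - j, m - j) * ((m - j)`! * (N - j - (m - j))`!))).
  by rewrite Nmj; ring.
rewrite bin_fact ?leq_sub2r // bin_fact //.
have -> : 'C(m, j) * ('C(N, m) * (j`! * ((m - j)`! * (N - m)`!)))
    = 'C(N, m) * ('C(m, j) * (j`! * (m - j)`!) * (N - m)`!) by ring.
by rewrite bin_fact // bin_fact.
Qed.

Lemma ffact_mul_exp_le s M j : s <= M -> s ^_ j * M ^ j <= M ^_ j * s ^ j.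
Proof.
move=> sM; elim: j => [|j IH]; first by rewrite !ffactn0.
rewrite !ffactnSr !expnSr mulnACA [leqRHS]mulnACA.
by apply: leq_mul => //; nia.
Qed.

Lemma bin_mul_exp_le s M j : s <= M -> 'C(s, j) * M ^ j <= 'C(M, j) * s ^ j.
Proof.
move=> sM; rewrite -(leq_pmul2r (fact_gt0 j)) mulnAC bin_ffact.
by rewrite [leqRHS]mulnAC bin_ffact ffact_mul_exp_le.
Qed.

Section Draws.
Variable U : finType.
Implicit Types (A S J H : {set U}) (m j : nat).

Definition draws A m : {set {set U}} := [set H : {set U} | (H \subset A) && (#|H| == m)].

Lemma card_draws_superset A J m : J \subset A -> #|J| <= m ->
  #|[set H in draws A m | J \subset H]| = 'C(#|A| - #|J|, m - #|J|).
Proof.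
move=> JA Jm; rewrite -cardsDS // -cards_draws -/(draws _ _).
have -> : [set H in draws A m | J \subset H] =
          (fun H => H :|: J) @: draws (A :\: J) (m - #|J|).
  apply/setP=> H; rewrite !inE; apply/idP/imsetP.
  - case/andP=> /andP[HA /eqP cH] JH; exists (H :\: J).
      by rewrite inE setSD //= cardsDS // cH.
    by rewrite setDE setUIl [~: J :|: J]setUC setUCr setIT; apply/esym/setUidPl.
  - case=> H' /[!inE] /andP[]; rewrite subsetD => /andP[H'A dH'J] /eqP cH' ->.
    rewrite subsetUr subUset H'A JA cardsU (disjoint_setI0 dH'J) cards0.
    by rewrite subn0 cH' (subnK Jm) eqxx.
rewrite card_in_imset // => H1 H2 /[!inE] /andP[+ _] /andP[+ _].
rewrite !subsetD => /andP[_ /setDidPl d1] /andP[_ /setDidPl d2] E.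
by rewrite -d1 -d2 -[H1 :\: J]setU0 -[H2 :\: J]setU0 -(setDv J) -!setDUl E.
Qed.

Lemma sum_draws_bin_cardI A S m j : S \subset A -> j <= m ->
  \sum_(H in draws A m) 'C(#|H :&: S|, j) = 'C(#|S|, j) * 'C(#|A| - j, m - j).
Proof.
move=> SA jm.
transitivity (\sum_(H in draws A m) \sum_(J in draws S j | J \subset H) 1).
  apply: eq_bigr => H _; rewrite sum1dep_card -cards_draws.
  apply: eq_card => J; rewrite !inE subsetI.
  by case: (J \subset H); case: (J \subset S); rewrite ?andbT ?andbF.
rewrite (exchange_big_dep (fun J => J \in draws S j)) /=; last by move=> H J _ /andP[].
rewrite -cards_draws -sum_nat_const; apply: eq_bigr => J /[!inE] /andP[JS /eqP cJ].
rewrite JS cJ eqxx sum1dep_card -cJ -card_draws_superset ?cJ ?(subset_trans JS SA) //.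
Qed.

Lemma sum_draws_bin_cardI_le A S m j : S \subset A -> j <= m ->
  (\sum_(H in draws A m) 'C(#|H :&: S|, j)) * #|A| ^ j
    <= 'C(m, j) * #|S| ^ j * 'C(#|A|, m).
Proof.
move=> SA jm; rewrite sum_draws_bin_cardI // mulnAC.
apply: (@leq_trans ('C(#|A|, j) * #|S| ^ j * 'C(#|A| - j, m - j))).
  by rewrite leq_mul2r bin_mul_exp_le ?orbT ?subset_leq_card.
by rewrite mulnAC mul_bin_subset // mulnAC.
Qed.
End Draws.

Import Order.TTheory GRing.Theory Num.Theory.
Local Open Scope ring_scope.

Section Chernoff.
Variables (R : realType) (U : finType).
Implicit Types (A S H : {set U}) (m : nat) (mu t eps : R).

Lemma exprD1n_widen mu X m : (X <= m)%N ->
  (mu + 1) ^+ X = \sum_(j < m.+1) mu ^+ j *+ 'C(X, j).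
Proof.
move=> Xm; rewrite exprD1n (big_ord_widen m.+1 (fun j => mu ^+ j *+ 'C(X, j))) //.
rewrite big_mkcond /=; apply: eq_bigr => j _; case: ltnP => // Xj.
by rewrite bin_small ?mulr0n.
Qed.

Lemma sum_draws_exprD1_le A S m mu : S \subset A -> (0 < #|A|)%N -> 0 <= mu ->
  \sum_(H in draws A m) (mu + 1) ^+ #|H :&: S|
    <= 'C(#|A|, m)%:R * (#|S|%:R / #|A|%:R * mu + 1) ^+ m.
Proof.
move=> SA A0 mu0.
rewrite (eq_bigr (fun H => \sum_(j < m.+1) mu ^+ j *+ 'C(#|H :&: S|, j))); last first.
  move=> H /[!inE] /andP[_ /eqP <-]; apply: exprD1n_widen.
  by rewrite subset_leq_card // subsetIl.
rewrite exchange_big /= exprD1n mulr_sumr; apply: ler_sum => j _.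
rewrite sumrMnr.
have Aj0 : 0 < #|A|%:R ^+ j :> R by rewrite exprn_gt0 // ltr0n.
have -> : 'C(#|A|, m)%:R * ((#|S|%:R / #|A|%:R * mu) ^+ j *+ 'C(m, j)) =
    mu ^+ j * (('C(m, j) * #|S| ^ j * 'C(#|A|, m))%N%:R / #|A|%:R ^+ j) :> R.
  rewrite !natrM !natrX -mulr_natr exprMn expr_div_n.
  by field; rewrite lt0r_neq0 // ltr0n.
rewrite -[mu ^+ j *+ _]mulr_natr ler_wpM2l ?exprn_ge0 //.
rewrite ler_pdivlMr // -natrX -natrM ler_nat.
exact: sum_draws_bin_cardI_le SA (ltnSE (ltn_ord j)).
Qed.

Lemma expR_divD1_le mu : 0 <= mu -> expR (mu / (mu + 1)) <= mu + 1.
Proof.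
move=> mu0; have mu1 : 0 < mu + 1 by lra.
have := expR_ge1Dx (- (mu / (mu + 1))).
have -> : 1 + - (mu / (mu + 1)) = (mu + 1)^-1 by field; lra.
rewrite expRN => le_inv.
by rewrite -ler_pV2 // inE ?unitfE ?expR_gt0 ?lt0r_neq0 ?expR_gt0 ?mu1.
Qed.

(* The exponent [mu / (mu + 1)] is used in place of [ln (1 + mu)], which it bounds
   from below (expR_divD1_le). *)
Lemma card_draws_gt_expR_le A S m mu t : S \subset A -> (0 < #|A|)%N -> 0 <= mu ->
  #|[set H in draws A m | t < #|H :&: S|%:R]|%:R * expR (t * (mu / (mu + 1)))
    <= 'C(#|A|, m)%:R * expR (#|S|%:R / #|A|%:R * mu * m%:R).
Proof.
move=> SA A0 mu0; have mu1 : 0 < mu + 1 by lra.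
set nu := mu / (mu + 1); set p := #|S|%:R / #|A|%:R.
have nu0 : 0 <= nu by rewrite divr_ge0 // ltW.
have p0 : 0 <= p by rewrite divr_ge0.
apply: (@le_trans _ _ ('C(#|A|, m)%:R * (p * mu + 1) ^+ m)); last first.
  have pmu1 : 0 <= p * mu + 1 by rewrite addr_ge0 // mulr_ge0.
  by rewrite ler_wpM2l // expRM_natr lerXn2r ?nnegrE ?expR_ge0 // addrC expR_ge1Dx.
apply: le_trans (sum_draws_exprD1_le m SA A0 mu0).
rewrite mulr_natl -sumr_const.
apply: (@le_trans _ _ (\sum_(H in draws A m | t < #|H :&: S|%:R) (mu + 1) ^+ #|H :&: S|)).
  rewrite [leLHS](eq_bigl (fun H => (H \in draws A m) && (t < #|H :&: S|%:R))); last first.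
    by move=> H; rewrite inE.
  apply: ler_sum => H /andP[_ ltH].
  apply: (@le_trans _ _ (expR (#|H :&: S|%:R * nu))).
    by rewrite ler_expR ler_wpM2r // ltW.
  by rewrite expRM_natl lerXn2r ?nnegrE ?expR_ge0 ?(ltW mu1) ?expR_divD1_le.
rewrite [leRHS](bigID (fun H => t < #|H :&: S|%:R)) /= lerDl.
by apply: sumr_ge0 => H _; rewrite exprn_ge0 // ltW.
Qed.

Definition chernoff_rate eps := (eps / 2) ^+ 2 / (eps / 2 + 1).

Lemma chernoff_rate_gt0 eps : 0 < eps -> 0 < chernoff_rate eps.
Proof. by move=> eps0; rewrite divr_gt0 ?exprn_gt0 //; lra. Qed.

Lemma card_draws_upper_dev_le A S m eps :
  S \subset A -> (0 < #|A|)%N -> 0 < eps ->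
  #|[set H in draws A m | (#|S|%:R / #|A|%:R + eps) * m%:R < #|H :&: S|%:R]|%:R
    <= 'C(#|A|, m)%:R * expR (- (chernoff_rate eps * m%:R)).
Proof.
move=> SA A0 eps0; set mu := eps / 2.
have mu0 : 0 < mu by rewrite /mu; lra.
have := card_draws_gt_expR_le m ((#|S|%:R / #|A|%:R + eps) * m%:R) SA A0 (ltW mu0).
set p := #|S|%:R / #|A|%:R.
have p1 : p <= 1 by rewrite /p ler_pdivrMr ?ltr0n // mul1r ler_nat subset_leq_card.
rewrite -ler_pdivlMr ?expR_gt0 // -[_ * expR _ / _]mulrA -expRB => /le_trans; apply.
rewrite ler_wpM2l // ler_expR -subr_le0.
(* the choice [mu = eps / 2] makes the exponent [m mu^2 (p - 1) / (mu + 1) <= 0] *)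
have -> : p * mu * m%:R - (p + eps) * m%:R * (mu / (mu + 1))
            - - (chernoff_rate eps * m%:R) = m%:R * (mu ^+ 2 / (mu + 1) * (p - 1)).
  rewrite /chernoff_rate -/mu; have -> : eps = 2 * mu by rewrite /mu; field.
  by field; lra.
rewrite mulr_ge0_le0 // mulr_ge0_le0 ?divr_ge0 ?exprn_ge0 //; lra.
Qed.

Lemma card_draws_lower_dev_le A S m eps :
  S \subset A -> (0 < #|A|)%N -> 0 < eps ->
  #|[set H in draws A m | #|H :&: S|%:R < (#|S|%:R / #|A|%:R - eps) * m%:R]|%:R
    <= 'C(#|A|, m)%:R * expR (- (chernoff_rate eps * m%:R)).
Proof.
(* A low count in [S] is a high count in [A :\: S]. *)
move=> SA A0 eps0; have DSA : A :\: S \subset A by apply: subsetDl.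
apply: le_trans (card_draws_upper_dev_le m DSA A0 eps0); rewrite ler_nat.
apply/subset_leq_card/subsetP => H /[!inE] /andP[/andP[HA /eqP cH] ltH].
rewrite HA cH eqxx /=.
have SA_le : (#|S| <= #|A|)%N by rewrite subset_leq_card.
have HS_le : (#|H :&: S| <= m)%N by rewrite -cH subset_leq_card // subsetIl.
have -> : H :&: (A :\: S) = H :\: S by rewrite setDE setIA (setIidPl HA) -setDE.
rewrite (cardsDS SA) cardsD cH !natrB //.
have -> : (#|A|%:R - #|S|%:R) / #|A|%:R = 1 - #|S|%:R / #|A|%:R :> R.
  by field; rewrite lt0r_neq0 // ltr0n.
by move: ltH; set X := #|H :&: S|%:R; set q := #|S|%:R / #|A|%:R; lra.
Qed.

Definition deviating A S m eps : {set {set U}} :=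
  [set H in draws A m | ~~ (((#|S|%:R / #|A|%:R - eps) * m%:R <= #|H :&: S|%:R)
                           && (#|H :&: S|%:R <= (#|S|%:R / #|A|%:R + eps) * m%:R))].

Lemma card_deviating_le A S m eps : S \subset A -> (0 < #|A|)%N -> 0 < eps ->
  #|deviating A S m eps|%:R <= 2 * 'C(#|A|, m)%:R * expR (- (chernoff_rate eps * m%:R)).
Proof.
move=> SA A0 eps0.
set lower := [set H in draws A m | #|H :&: S|%:R < (#|S|%:R / #|A|%:R - eps) * m%:R].
set upper := [set H in draws A m | (#|S|%:R / #|A|%:R + eps) * m%:R < #|H :&: S|%:R].
have dev_sub : deviating A S m eps \subset lower :|: upper.
  by apply/subsetP => H; rewrite !inE negb_and -!ltNge => /andP[-> /orP[] ->]; rewrite ?orbT.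
apply: (@le_trans _ _ (#|lower| + #|upper|)%N%:R).
  by rewrite ler_nat (leq_trans (subset_leq_card dev_sub)) ?(leq_card_setU _ _).1.
rewrite natrD -mulrA mulr_natl mulr2n.
exact: lerD (card_draws_lower_dev_le m SA A0 eps0) (card_draws_upper_dev_le m SA A0 eps0).
Qed.
End Chernoff.

Lemma card_sum_fibres (T I : finType) (f : T -> I) (A : {set T}) :
  #|A| = (\sum_(i : I) #|[set x in A | f x == i]|)%N.
Proof.
rewrite -sum1_card (partition_big f predT) //=; apply: eq_bigr => i _.
by rewrite -sum1_card; apply: eq_bigl => x; rewrite inE.
Qed.

Definition asubsets (a n : nat) : {set {set 'I_n}} := [set e : {set 'I_n} | #|e| == a].

Lemma card_asubsets a n : #|asubsets a n| = 'C(n, a).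
Proof. by rewrite card_draws card_ord. Qed.

Section TypedEdges.
Variables (a n b : nat) (C : coloring n b) (T : cmset a b).

Definition typed_edges : {set {set 'I_n}} := [set e in asubsets a n | has_type C e T].

(* An edge of type [T] is the same as a choice, for each colour [j], of [T j]
   vertices of colour [j]. *)
Lemma card_has_type :
  #|[set e : {set 'I_n} | has_type C e T]| = (\prod_(j < b) 'C(ncol C j, T j))%N.
Proof.
pose slices (e : {set 'I_n}) : {dffun forall j : 'I_b, {set 'I_n}} :=
  [ffun j => [set v in e | C v == j]].
have slices_inj : injective slices.
  move=> e1 e2 /ffunP eq_slices; apply/setP => v.
  by have /setP/(_ v) := eq_slices (C v); rewrite !ffunE !inE eqxx !andbT.
rewrite -(card_imset _ slices_inj).
have -> : slices @: [set e | has_type C e T] =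
          setXn (fun j => draws [set v | C v == j] (T j)).
  apply/setP => f; apply/imsetP/setXnP.
  - case=> e /[!inE] /forallP typ -> j; rewrite ffunE !inE typ andbT.
    by apply/subsetP => v; rewrite !inE => /andP[].
  - move=> f_draws.
    have f_sub j : f j \subset [set v | C v == j].
      by have := f_draws j; rewrite inE => /andP[].
    have slices_e : slices [set v | v \in f (C v)] = f.
      apply/ffunP => j; rewrite ffunE; apply/setP => v; rewrite !inE.
      case: eqVneq => [<- | ne]; rewrite ?andbT ?andbF //; apply/esym/negbTE/negP => vf.
      by have := subsetP (f_sub j) v vf; rewrite inE (negbTE ne).
    exists [set v | v \in f (C v)] => //; rewrite inE; apply/forallP => j.
    by have := f_draws j; rewrite -{1}slices_e ffunE inE => /andP[].
by rewrite cardsXn; apply: eq_bigr => j _; rewrite cards_draws.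
Qed.

Hypothesis amT : is_amset T.

Lemma typed_edgesE : typed_edges = [set e | has_type C e T].
Proof.
apply/setP => e; rewrite !inE andb_idl // => /forallP typ.
rewrite (card_sum_fibres C) -(eqP amT); apply/eqP/eq_bigr => j _.
exact/eqP/typ.
Qed.

Lemma card_typed_edges : #|typed_edges| = (\prod_(j < b) 'C(ncol C j, T j))%N.
Proof. by rewrite typed_edgesE card_has_type. Qed.

Lemma pC_typed_edges (R : realType) :
  pC R C T = #|typed_edges|%:R / #|asubsets a n|%:R.
Proof. by rewrite /pC card_typed_edges card_asubsets. Qed.

End TypedEdges.

Lemma count_type_cardI a n b (H : {set {set 'I_n}}) (C : coloring n b) (T : cmset a b) :
  H \subset asubsets a n -> count_type H C T = #|H :&: typed_edges C T|.
Proof.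
move=> /subsetP Ha; apply: eq_card => e; rewrite !inE.
by case eH: (e \in H) => //=; have := Ha e eH; rewrite inE => ->.
Qed.

Lemma card_bigcup_le (I T : finType) (P : pred I) (F : I -> {set T}) :
  (#|\bigcup_(i | P i) F i| <= \sum_(i | P i) #|F i|)%N.
Proof.
elim/big_ind2: _ => [|k1 A1 k2 A2 le1 le2|i _] //; first by rewrite cards0.
exact: leq_trans (leq_card_setU A1 A2).1 (leq_add le1 le2).
Qed.

Section BadHypergraphs.
Variables (R : realType) (a b n m : nat) (eps : R).

Lemma bad_family_sub_deviating :
  @bad_family R a b n m eps \subset
  \bigcup_(ct : coloring n b * cmset a b | is_amset ct.2)
     deviating (asubsets a n) (typed_edges ct.1 ct.2) m eps.
Proof.
apply/subsetP => H /[!inE] /andP[H_hyp /forallPn[C /forallPn[T]]].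
rewrite negb_imply => /andP[amT not_good]; apply/bigcupP; exists (C, T) => //=.
move: H_hyp; rewrite inE -/(asubsets a n) => /andP[Ha Hm].
by rewrite inE Ha Hm -count_type_cardI // -pC_typed_edges.
Qed.

Lemma card_bad_family_le : (a <= n)%N -> 0 < eps ->
  #|@bad_family R a b n m eps|%:R <= 2 * (a.+1 ^ b)%:R * b%:R ^+ n
    * expR (- (chernoff_rate eps * m%:R)) * #|hyp_family a n m|%:R.
Proof.
move=> an eps0; set E := expR _.
have A0 : (0 < #|asubsets a n|)%N by rewrite card_asubsets bin_gt0.
have -> : hyp_family a n m = draws (asubsets a n) m by [].
rewrite cards_draws.
apply: (@le_trans _ _ (\sum_(ct : coloring n b * cmset a b | is_amset ct.2)
    #|deviating (asubsets a n) (typed_edges ct.1 ct.2) m eps|%:R)).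
  rewrite -natr_sum ler_nat.
  exact: leq_trans (subset_leq_card bad_family_sub_deviating) (card_bigcup_le _ _).
apply: (@le_trans _ _ (\sum_(ct : coloring n b * cmset a b)
    2 * 'C(#|asubsets a n|, m)%:R * E)).
  rewrite [leRHS](bigID (fun ct => is_amset ct.2)) /= -[leLHS]addr0.
  apply: lerD; last by apply: sumr_ge0 => ct _; rewrite !mulr_ge0 ?expR_ge0.
  apply: ler_sum => -[C T] /= amT; apply: card_deviating_le A0 eps0.
  by apply/subsetP => e /[!inE] /andP[].
rewrite sumr_const card_prod !card_ffun !card_ord -[_ *+ (_ * _)]mulr_natr natrM !natrX.
by rewrite le_eqVlt; apply/orP; left; apply/eqP; ring.
Qed.

End BadHypergraphs.

Lemma superlinear_expR_small (R : realType) (M B c delta : R) (m : nat -> nat) :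
  0 <= M -> 0 <= B -> 0 < c -> 0 < delta ->
  (forall K : R, exists N : nat, forall n : nat, (N <= n)%N -> K * n%:R < (m n)%:R) ->
  exists N : nat, forall n : nat, (N <= n)%N ->
    M * B ^+ n * expR (- (c * (m n)%:R)) <= delta.
Proof.
move=> M0 B0 c0 delta0 m_superlinear.
have [N1 HN1] := m_superlinear ((2 * B + 1) / c).
exists (maxn N1 (Num.bound (M / delta))) => n; rewrite geq_max => /andP[n1 n2].
have pow2 : M < delta * 2 ^+ n.
  by have := upper_nthrootP n2; rewrite ltr_pdivrMr // mulrC.
have growth : (2 * (B + 1)) ^+ n <= expR (c * (m n)%:R).
  apply: (@le_trans _ _ (expR ((2 * B + 1) * n%:R))).
    have B1 : 0 <= 2 * (B + 1) by lra.
    rewrite expRM_natr lerXn2r ?nnegrE ?expR_ge0 //.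
    by apply: le_trans (expR_ge1Dx _); lra.
  rewrite ler_expR -[_ * n%:R](mulVKf (lt0r_neq0 c0)) ler_pM2l // mulrA.
  by rewrite [c^-1 * _]mulrC ltW // HN1.
rewrite expRN ler_pdivrMr ?expR_gt0 //.
apply: le_trans (ler_wpM2l (ltW delta0) growth).
rewrite exprMn mulrA ler_pM ?exprn_ge0 ?(ltW pow2) // lerXn2r ?nnegrE //; lra.
Qed.

Theorem lemma11 (R : realType) (a b : nat) (eps : R) (m : nat -> nat) :
  (2 <= a)%N -> (2 <= b)%N -> 0 < eps ->
  (* m(n)/n -> infinity *)
  (forall K : R, exists N : nat, forall n : nat, (N <= n)%N -> K * n%:R < (m n)%:R) ->
  (* the number of bad hypergraphs is o(|H(a,n,m(n))|) *)
  forall delta : R, 0 < delta ->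
  exists N : nat, forall n : nat, (N <= n)%N ->
    (#|@bad_family R a b n (m n) eps|%:R <= delta * (#|hyp_family a n (m n)|%:R) :> R).
Proof.
move=> _ _ eps0 m_superlinear delta delta0.
have M0 : 0 <= 2 * (a.+1 ^ b)%:R :> R by rewrite mulr_ge0.
have [N HN] := superlinear_expR_small M0 (ler0n _ b) (chernoff_rate_gt0 eps0) delta0
                 m_superlinear.
exists (maxn N a) => n; rewrite geq_max => /andP[nN an].
apply: le_trans (card_bad_family_le _ _ an eps0) _.
by rewrite ler_wpM2r // HN.
Qed.
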